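(* Let $n,k,i$ be integers with $n\ge k\ge1$ and $0\le i\le n-k$, and let $(\pi_1,\pi_2,\pi_3)\in\mathcal B_{n,k}^{(i)}$. Then (i) $|\min(\pi_1)\cap\min(\pi_3)|=k$; (ii) $|\mathrm{Sing}(\pi_1)\setminus\min(\pi_3)|=i$; (iii) $|\mathrm{Sing}(\pi_3)\setminus\min(\pi_1)|=n-k-i$.
   Context: Let $[n]=\{1,\dots,n\}$ and let $\Pi_{n,m}$ denote the set of partitions of $[n]$ into $m$ nonempty blocks. For a partition $\pi$, $\min(\pi)$ is the set of minima of its blocks and $\mathrm{Sing}(\pi)$ is the set of elements forming singleton blocks of $\pi$. $\mathcal B_{n,k}^{(i)}$ is the set of triples $(\pi_1,\pi_2,\pi_3)\in\Pi_{n,k+i}\times\Pi_{n,k+i}\times\Pi_{n,n-i}$ such that (i) $\min(\pi_1)=\min(\pi_2)$ and $\mathrm{Sing}(\pi_1)=\mathrm{Sing}(\pi_2)$, and (ii) $\min(\pi_1)\cup\mathrm{Sing}(\pi_3)=\mathrm{Sing}(\pi_1)\cup\min(\pi_3)=[n]$. *)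

From mathcomp Require Import all_boot.
Set Implicit Arguments. Unset Strict Implicit. Unset Printing Implicit Defensive.

(* The ground set [n] = {1,...,n} is modelled by 'I_n = {0,...,n-1}
   (order-preserving shift by one; only the order matters). *)

Definition set_partition_into (n m : nat) (P : {set {set 'I_n}}) : Prop :=
  partition P [set: 'I_n] /\ #|P| = m.

Definition minP (n : nat) (P : {set {set 'I_n}}) : {set 'I_n} :=
  [set x : 'I_n | [exists B in P, (x \in B) && [forall y in B, x <= y]]].

Definition SingP (n : nat) (P : {set {set 'I_n}}) : {set 'I_n} :=
  [set x : 'I_n | [set x] \in P].

Definition inB (n k i : nat) (p1 p2 p3 : {set {set 'I_n}}) : Prop :=
  [/\ set_partition_into (k + i) p1,
      set_partition_into (k + i) p2,
      set_partition_into (n - i) p3,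
      minP p1 = minP p2 /\ SingP p1 = SingP p2 &
      minP p1 :|: SingP p3 = [set: 'I_n] /\ SingP p1 :|: minP p3 = [set: 'I_n]].

(* Every block of a partition has exactly one minimum, so a partition into m
   blocks has m minima, and singletons are among the minima.  The covering
   condition min(pi_1) ∪ Sing(pi_3) = [n] therefore forces Sing(pi_3) \ min(pi_1)
   to be the complement of min(pi_1), of size n - (k + i); symmetrically
   Sing(pi_1) \ min(pi_3) is the complement of min(pi_3), of size i.  Finally
   min(pi_1) ∪ min(pi_3) = [n], and inclusion-exclusion gives
   |min(pi_1) ∩ min(pi_3)| = (k + i) + (n - i) - n = k. *)

From mathcomp Require Import all_boot zify.

Lemma setD_cover_eq_setC {T : finType} {A C : {set T}} :
  A :|: C = [set: T] -> A :\: C = ~: C.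
Proof.
move=> /setP cover; apply/setP=> x; move: (cover x); rewrite !inE.
by case: (x \in A); case: (x \in C).
Qed.

Section Minima.

Variables (n : nat) (P : {set {set 'I_n}}).

Lemma SingP_sub_minP : SingP P \subset minP P.
Proof.
apply/subsetP=> x; rewrite !inE => xP; apply/existsP; exists [set x].
by rewrite xP set11; apply/forallP=> y; apply/implyP; rewrite inE => /eqP ->.
Qed.

Hypothesis partP : partition P [set: 'I_n].

Lemma pblock_minP_inj : {in minP P &, injective (pblock P)}.
Proof.
have triv := partition_trivIset partP.
move=> x y; rewrite !inE => /existsP[B /and3P[BP xB /forallP xmin]].
move=> /existsP[C /and3P[CP yC /forallP ymin]].
rewrite (def_pblock triv BP xB) (def_pblock triv CP yC) => eqBC; subst C.
apply/val_inj/eqP; rewrite eqn_leq.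
by move: (xmin y) (ymin x); rewrite xB yC /= => -> ->.
Qed.

Lemma pblock_minP_onto : pblock P @: minP P = P.
Proof.
have triv := partition_trivIset partP.
apply/setP=> B; apply/imsetP/idP.
  case=> x; rewrite inE => /existsP[C /and3P[CP xC _]] ->.
  by rewrite (def_pblock triv CP xC).
move=> BP; have /set0Pn[x0 xB0] := partition_neq0 partP BP.
case: (arg_minnP (fun x : 'I_n => val x) xB0) => x xB' xmin.
have xB : x \in B := xB'.
exists x; last by rewrite (def_pblock triv BP xB).
rewrite inE; apply/existsP; exists B; rewrite BP xB /=.
by apply/forallP=> y; apply/implyP=> yB; apply: xmin.
Qed.

Lemma card_minP : #|minP P| = #|P|.
Proof. by rewrite -{2}pblock_minP_onto (card_in_imset pblock_minP_inj). Qed.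

End Minima.

Lemma card_minP_into (n m : nat) (P : {set {set 'I_n}}) :
  set_partition_into m P -> #|minP P| = m.
Proof. by case=> partP <-; apply: card_minP. Qed.

Theorem lemma12 (n k i : nat) (p1 p2 p3 : {set {set 'I_n}}) :
  1 <= k -> k <= n -> i <= n - k ->
  inB k i p1 p2 p3 ->
  [/\ #|minP p1 :&: minP p3| = k,
      #|SingP p1 :\: minP p3| = i &
      #|SingP p3 :\: minP p1| = n - k - i].
Proof.
move=> _ _ le_i_nk [/card_minP_into card1 _ /card_minP_into card3 _ [cover1 cover3]].
have min_cover : minP p1 :|: minP p3 = [set: 'I_n].
  by apply/eqP; rewrite eqEsubset subsetT -cover1 setUS // SingP_sub_minP.
have incl_excl := cardsU (minP p1) (minP p3).
have compl1 := cardsC (minP p1); have compl3 := cardsC (minP p3).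
have le_cap : #|minP p1 :&: minP p3| <= k + i.
  by rewrite -card1 subset_leq_card ?subsetIl.
rewrite min_cover cardsT card_ord card1 card3 in incl_excl.
rewrite card_ord card1 in compl1; rewrite card_ord card3 in compl3.
rewrite setUC in cover1.
rewrite (setD_cover_eq_setC cover1) (setD_cover_eq_setC cover3).
split; lia.
Qed.
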